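(* Let $T=(T_a,T_b)$ be a rooted binary tree on $n$ leaves with minimal Colless index, where $T_a,T_b$ have $n_a\geq n_b$ leaves. Let $T_n^{gfb}=(T_a^{gfb},T_b^{gfb})$ with $n_a^{gfb}\geq n_b^{gfb}$ leaves and $T_n^{mb}=(T_a^{mb},T_b^{mb})$ with $n_a^{mb}\geq n_b^{mb}$ leaves. Then $$n_a^{gfb}\geq n_a\geq n_a^{mb}\quad\text{and}\quad n_b^{gfb}\leq n_b\leq n_b^{mb}.$$
   Context: A rooted binary tree with $n\geq 2$ leaves is a rooted tree whose root has degree 2 and all other internal nodes have degree 3; for $n=1$ it is a single node. Trees are up to isomorphism. $T=(T_a,T_b)$ denotes the decomposition into the subtrees rooted at the children of the root. For an internal node $v$ with children $v_1,v_2$, let $\kappa(v_i)$ be the number of leaves descending from $v_i$ ($1$ if a leaf) and $bal(v)=|\kappa(v_1)-\kappa(v_2)|$. The Colless index is $\mathcal{C}(T)=\sum_v bal(v)$ over internal nodes; minimal means minimal among rooted binary trees with $n$ leaves. $T_n^{mb}$ is the unique tree with $n$ leaves having $bal(v)\leq1$ at every internal node (maximally balanced tree). The GFB tree $T_n^{gfb}$ is the output of: start with $n$ single-node trees; while more than one tree remains, remove a tree $u$ of minimal size (number of leaves), then remove a tree $v$ of minimal size among the remaining ones, and insert the tree with a new root whose children are the roots of $u$ and $v$; output the remaining tree. *)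

From mathcomp Require Import all_boot.
From Stdlib Require Import Permutation.
Set Implicit Arguments. Unset Strict Implicit. Unset Printing Implicit Defensive.

(* Rooted binary trees (unlabelled; isomorphism is irrelevant since every
   quantity below is an isomorphism invariant). Node l r = tree whose root
   has children the roots of l and r. *)
Inductive tree : Type := Leaf | Node of tree & tree.

Fixpoint leaves (t : tree) : nat :=
  match t with Leaf => 1 | Node l r => leaves l + leaves r end.

Definition bal (l r : tree) : nat := (leaves l - leaves r) + (leaves r - leaves l).

Fixpoint colless (t : tree) : nat :=
  match t with Leaf => 0 | Node l r => colless l + colless r + bal l r end.

Definition colless_minimal (t : tree) : Prop :=
  forall t' : tree, leaves t' = leaves t -> colless t <= colless t'.

(* bal(v) <= 1 at every internal node: characterizes T_n^mb *)
Fixpoint max_balanced (t : tree) : Prop :=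
  match t with
  | Leaf => True
  | Node l r => bal l r <= 1 /\ max_balanced l /\ max_balanced r
  end.

(* One step of the GFB algorithm on a multiset (list up to permutation) of
   trees: remove a tree u of minimal size, then a tree v of minimal size among
   the remaining ones, and insert the tree with children u and v. *)
Inductive gfb_step : seq tree -> seq tree -> Prop :=
| GfbStep (s : seq tree) (u v : tree) (rest : seq tree) :
    Permutation s (u :: v :: rest) ->
    all (fun t => leaves u <= leaves t) (v :: rest) ->
    all (fun t => leaves v <= leaves t) rest ->
    gfb_step s (Node u v :: rest).

Inductive gfb_reach : seq tree -> seq tree -> Prop :=
| GfbRefl s : gfb_reach s s
| GfbTrans s1 s2 s3 : gfb_step s1 s2 -> gfb_reach s2 s3 -> gfb_reach s1 s3.

(* t is a possible output of the GFB algorithm started on n single-node trees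
   (any choice among ties is allowed). *)
Definition is_gfb (n : nat) (t : tree) : Prop := gfb_reach (nseq n Leaf) [:: t].

Definition root_na (t : tree) : nat :=
  match t with Leaf => 1 | Node l r => maxn (leaves l) (leaves r) end.
Definition root_nb (t : tree) : nat :=
  match t with Leaf => 0 | Node l r => minn (leaves l) (leaves r) end.

(* The minimal Colless index c(n) obeys c(n) = c(ceil(n/2)) + c(floor(n/2)) + (n mod 2)
   and c(a + b) <= c(a) + c(b) + |a - b| for all a, b.  The root split (a, b) of a
   Colless-minimal tree therefore attains equality, and by induction on k, equality with
   2^(k+1) <= a + b <= 2^(k+2) forces 2^k <= a, b <= 2^(k+1).  Meanwhile GFB keeps every
   tree between 2^k and 2^(k+1) leaves, with at most one strictly in between, so its root
   split is the most unbalanced one in that range.  The maximally balanced split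
   (ceil(n/2), floor(n/2)) is trivially the most balanced of all. *)

(* Imported before MathComp, whose [perm_trans] the Stdlib constructor would shadow. *)
From Stdlib Require Import Permutation.
From mathcomp Require Import all_boot zify.

Set Implicit Arguments.
Unset Strict Implicit.
Unset Printing Implicit Defensive.

Lemma parity n : exists x, n = x.*2 \/ n = x.*2.+1.
Proof. exists n./2; have := odd_double_half n; case: (odd n) => /= <-; [right|left]; lia. Qed.

(* [cmin n] is the Colless index of the maximally balanced tree with [n] leaves; fuel [n]
   suffices because both halves of [n >= 2] are smaller than [n]. *)
Fixpoint cmin_rec (fuel n : nat) : nat :=
  if fuel is fuel.+1 then
    if n <= 1 then 0 else cmin_rec fuel (uphalf n) + cmin_rec fuel n./2 + odd n
  else 0.

Definition cmin (n : nat) : nat := cmin_rec n n.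

Lemma cmin_rec_fuel f g n : n <= f -> n <= g -> cmin_rec f n = cmin_rec g n.
Proof.
elim: f g n => [|f IHf] [|g] n //= le_nf le_ng; try by rewrite ifT; lia.
by case: ifP => // n_gt1; rewrite (IHf g (uphalf n)) ?(IHf g n./2); lia.
Qed.

Lemma cmin_small n : n <= 1 -> cmin n = 0.
Proof. by case: n => [|[|]]. Qed.

Lemma cminE n : 1 < n -> cmin n = cmin (uphalf n) + cmin n./2 + odd n.
Proof.
case: n => // n n_gt1.
have cmin_rec_succ m : cmin_rec n.+1 m =
    if m <= 1 then 0 else cmin_rec n (uphalf m) + cmin_rec n m./2 + odd m by [].
rewrite [LHS]cmin_rec_succ ifN -?ltnNge // /cmin.
by rewrite (@cmin_rec_fuel n (uphalf n.+1)) ?(@cmin_rec_fuel n n.+1./2); lia.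
Qed.

Lemma cmin_double k : cmin k.*2 = (cmin k).*2.
Proof.
case: k => [|k] //; rewrite cminE ?uphalf_double ?doubleK ?odd_double; lia.
Qed.

Lemma cmin_double_succ k : cmin k.*2.+1 = cmin k.+1 + cmin k + (0 < k).
Proof.
case: k => [|k] //; rewrite cminE /= ?uphalf_double ?doubleK ?odd_double; lia.
Qed.

(* The least Colless index of a tree whose root splits [a + b] leaves as [a] and [b]. *)
Definition split_cost (a b : nat) : nat := cmin a + cmin b + ((a - b) + (b - a)).

Lemma split_costC a b : split_cost a b = split_cost b a.
Proof. rewrite /split_cost; lia. Qed.

Lemma split_costn0 a : split_cost a 0 = cmin a + a.
Proof. by rewrite /split_cost (@cmin_small 0) // addn0 subn0 sub0n addn0. Qed.

Lemma split_cost_double x y : split_cost x.*2 y.*2 = (split_cost x y).*2.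
Proof. rewrite /split_cost !cmin_double; lia. Qed.

Lemma split_cost_double_succ x y :
  split_cost x.*2 y.*2.+1 = split_cost x y + split_cost x y.+1 + (0 < y).
Proof. rewrite /split_cost cmin_double cmin_double_succ; lia. Qed.

Lemma split_cost_succ_double x y : 0 < x + y ->
  split_cost x y.+1 + split_cost x.+1 y <= split_cost x.*2.+1 y.*2.+1.
Proof. rewrite /split_cost !cmin_double_succ; lia. Qed.

Lemma cmin_le_split_cost a b : cmin (a + b) <= split_cost a b.
Proof.
have [m] := ubnP (a + b); elim: m a b => // m IH a b /ltnSE le_ab_m.
have [/cmin_small -> // | ab_gt1] := leqP (a + b) 1.
wlog le_odd : a b le_ab_m ab_gt1 / odd a <= odd b.
  move=> W; case: (leqP (odd a) (odd b)) => [|/ltnW]; first exact: W.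
  by rewrite addnC split_costC; apply: W; rewrite // addnC.
move: le_ab_m ab_gt1 le_odd; have [x [->|->]] := parity a; have [y [->|->]] := parity b;
  rewrite /= ?odd_double // => le_ab_m ab_gt1 _.
- rewrite -doubleD cmin_double split_cost_double leq_double; apply: IH; lia.
- rewrite addnS -doubleD cmin_double_succ split_cost_double_succ.
  have := IH x y.+1; have := IH x y; rewrite addnS.
  case: (posnP y) => [->|y_gt0]; last by lia.
  by rewrite !addn0 split_costn0; lia.
- rewrite addSn addnS -doubleD -doubleS cmin_double.
  have [xy0|xy_gt0] := posnP (x + y).
    by have [-> ->] : x = 0 /\ y = 0 by lia.
  have := split_cost_succ_double xy_gt0.
  have := IH x y.+1; have := IH x.+1 y; rewrite addnS addSn; lia.
Qed.

Definition between_pow2 (k n : nat) : bool := 2 ^ k <= n <= 2 ^ k.+1.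

Lemma between_pow2_tight_split k a b : split_cost a b = cmin (a + b) ->
  between_pow2 k.+1 (a + b) -> between_pow2 k a && between_pow2 k b.
Proof.
elim: k a b => [|k IH] a b tight range.
  move: range; rewrite /between_pow2 !expnS expn0 => range.
  have [a_le4 b_le4] : a <= 4 /\ b <= 4 by lia.
  by case: a a_le4 tight range => [|[|[|[|[|]]]]] //; case: b b_le4 => [|[|[|[|[|]]]]].
have P_gt0 : 0 < 2 ^ k := expn_gt0 2 k.
wlog le_odd : a b tight range / odd a <= odd b.
  move=> W; case: (leqP (odd a) (odd b)) => [|/ltnW]; first exact: W.
  by rewrite andbC; apply: W; rewrite // addnC // split_costC.
move: tight range le_odd; rewrite /between_pow2 !expnS in IH *.
have [x [->|->]] := parity a; have [y [->|->]] := parity b;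
  rewrite /= ?odd_double // => tight range _.
- move: tight; rewrite -doubleD cmin_double split_cost_double => /double_inj tight.
  have := IH x y tight; lia.
- move: tight; rewrite addnS -doubleD cmin_double_succ split_cost_double_succ => tight.
  have := cmin_le_split_cost x y.+1; have := cmin_le_split_cost x y.
  rewrite addnS; case: (posnP y) => [y0|y_gt0] le0 le1.
    by move: tight le1; rewrite y0 !addn0 split_costn0; lia.
  have := IH x y ltac:(lia) ltac:(lia); have := IH x y.+1 ltac:(rewrite addnS; lia) ltac:(lia).
  lia.
- move: tight; rewrite addSn addnS -doubleD -doubleS cmin_double => tight.
  have /split_cost_succ_double : 0 < x + y by lia.
  have := cmin_le_split_cost x y.+1; have := cmin_le_split_cost x.+1 y.
  rewrite addnS addSn => le0 le1 le01.
  have := IH x y.+1 ltac:(rewrite addnS; lia) ltac:(rewrite addnS; lia).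
  have := IH x.+1 y ltac:(rewrite addSn; lia) ltac:(rewrite addSn; lia).
  lia.
Qed.

Lemma leaves_gt0 t : 0 < leaves t.
Proof. by elim: t => //= l l_gt0 r _; rewrite addn_gt0 l_gt0. Qed.

Lemma cmin_le_colless t : cmin (leaves t) <= colless t.
Proof.
elim: t => //= l IHl r IHr; apply: leq_trans (cmin_le_split_cost _ _) _.
by rewrite /split_cost /bal; lia.
Qed.

Lemma colless_max_balanced t : max_balanced t -> colless t = cmin (leaves t).
Proof.
elim: t => //= l IHl r IHr [bal_lr [/IHl -> /IHr ->]]; move: bal_lr; rewrite /bal => bal_lr.
rewrite (@cminE (leaves l + leaves r)); last by have := leaves_gt0 l; have := leaves_gt0 r; lia.
have [le_lr|lt_rl] := leqP (leaves l) (leaves r).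
- have -> : uphalf (leaves l + leaves r) = leaves r by lia.
  have -> : (leaves l + leaves r)./2 = leaves l by lia.
  lia.
- have -> : uphalf (leaves l + leaves r) = leaves l by lia.
  have -> : (leaves l + leaves r)./2 = leaves r by lia.
  lia.
Qed.

Lemma colless_minimal_split_tight l r t :
  colless_minimal (Node l r) -> max_balanced t -> leaves t = leaves (Node l r) ->
  split_cost (leaves l) (leaves r) = cmin (leaves l + leaves r).
Proof.
move=> min_lr mb_t leaves_t; have := min_lr t leaves_t.
rewrite (colless_max_balanced mb_t) leaves_t /=.
have := cmin_le_split_cost (leaves l) (leaves r).
have := cmin_le_colless l; have := cmin_le_colless r; rewrite /split_cost /bal; lia.
Qed.

Lemma uphalf_leaves_le_root_na t : uphalf (leaves t) <= root_na t.
Proof. case: t => //= l r; lia. Qed.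

Lemma root_na_max_balanced t : max_balanced t -> root_na t = uphalf (leaves t).
Proof. by case: t => //= l r [bal_lr _]; move: bal_lr; rewrite /bal; lia. Qed.

Lemma root_na_add_nb t : root_na t + root_nb t = leaves t.
Proof. case: t => //= l r; lia. Qed.

Definition pow2_layer (k : nat) (s : seq nat) : bool :=
  all (between_pow2 k) s && (count (fun m => 2 ^ k < m < 2 ^ k.+1) s <= 1).

Lemma pow2_layer_perm k s t : perm_eq s t -> pow2_layer k s = pow2_layer k t.
Proof. by move=> eq_st; rewrite /pow2_layer (perm_all _ eq_st) (permP eq_st). Qed.

Lemma pow2_layer_merge k u v s :
  all (leq u) (v :: s) -> all (leq v) s -> pow2_layer k [:: u, v & s] ->
  pow2_layer k (u + v :: s) \/ pow2_layer k.+1 (u + v :: s).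
Proof.
rewrite /pow2_layer /= => /andP[le_uv min_u] min_v /andP[/and3P[lay_u lay_v lay_s] cnt].
have P_gt0 : 0 < 2 ^ k := expn_gt0 2 k.
move: lay_u lay_v lay_s cnt; rewrite /between_pow2 !expnS; set P := 2 ^ k.
move=> lay_u lay_v lay_s cnt.
have [uv_eqP | uv_neqP] := boolP ((u == P) && (v == P)).
  by left; rewrite lay_s andbT; lia.
(* Not both of [u], [v] have [P] leaves, so [v > P]; either [v = 2P] or [v] is the one
   size strictly between [P] and [2P]: in both cases every other size is [2P]. *)
have s_top : all (pred1 (2 * P)) s.
  apply/allP => t t_s; move: cnt; rewrite (permP (perm_to_rem t_s)) /=.
  have := allP lay_s t t_s; have := allP min_v t t_s; lia.
right; rewrite -andbA; apply/and3P; split; first by lia.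
- by apply: sub_all s_top => t /eqP ->; lia.
- suff -> : count (fun m => 2 * P < m < 2 * (2 * P)) s = 0 by lia.
  rewrite (@eq_in_count _ _ pred0) ?count_pred0 // => t /(allP s_top) /eqP ->.
  by rewrite ltnn.
Qed.

Lemma pow2_layer_pair_maxn k u v a b :
  pow2_layer k [:: u; v] -> between_pow2 k a -> between_pow2 k b -> a + b = u + v ->
  maxn a b <= maxn u v.
Proof. rewrite /pow2_layer /between_pow2 /= !expnS; lia. Qed.

Lemma pow2_layer_pair_sum k u v : pow2_layer k [:: u; v] -> between_pow2 k.+1 (u + v).
Proof. rewrite /pow2_layer /between_pow2 /= !expnS; lia. Qed.

Lemma Permutation_perm_eq (T : eqType) (s t : seq T) : Permutation s t -> perm_eq s t.
Proof.
elim=> [|x s1 t1 _|x y s1|s1 s2 s3 _ eq12 _ eq23]; rewrite ?perm_cons //.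
  by rewrite (perm_catCA [:: y] [:: x] s1).
exact: perm_trans eq12 eq23.
Qed.

Definition gfb_layered (s : seq tree) : Prop := exists k, pow2_layer k (map leaves s).

Lemma gfb_step_layered s s' : gfb_step s s' -> gfb_layered s -> gfb_layered s'.
Proof.
case=> {s'} s0 u v rest /(Permutation_map leaves)/Permutation_perm_eq perm_s min_u min_v [k].
rewrite (pow2_layer_perm _ perm_s) /= => lay.
have min_u' : all (leq (leaves u)) (map leaves (v :: rest)) by rewrite all_map.
have min_v' : all (leq (leaves v)) (map leaves rest) by rewrite all_map.
by case: (pow2_layer_merge min_u' min_v' lay) => lay'; [exists k | exists k.+1].
Qed.

Lemma gfb_step_leaves_sum s s' :
  gfb_step s s' -> sumn (map leaves s') = sumn (map leaves s).
Proof.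
case=> {s'} s0 u v rest /(Permutation_map leaves)/Permutation_perm_eq/perm_sumn -> _ _ /=.
by rewrite addnA.
Qed.

Lemma gfb_reach_layered s s' : gfb_reach s s' -> gfb_layered s -> gfb_layered s'.
Proof. by elim=> // s1 s2 s3 /gfb_step_layered step _ IH /step. Qed.

Lemma gfb_reach_leaves_sum s s' :
  gfb_reach s s' -> sumn (map leaves s') = sumn (map leaves s).
Proof. by elim=> // s1 s2 s3 /gfb_step_leaves_sum <- _. Qed.

Lemma gfb_reach_last s s' :
  gfb_reach s s' -> s = s' \/ exists2 s0, gfb_reach s s0 & gfb_step s0 s'.
Proof.
elim=> [s0|s1 s2 s3 step12 _ [<-|[s0 reach20 step03]]]; [by left | right..].
- by exists s1 => //; apply: GfbRefl.
- by exists s0 => //; apply: GfbTrans step12 reach20.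
Qed.

Lemma is_gfb_root_layer n t : 1 < n -> is_gfb n t ->
  exists u v k, [/\ t = Node u v, leaves u + leaves v = n
                   & pow2_layer k [:: leaves u; leaves v]].
Proof.
move=> n_gt1 gfb_t; case: (gfb_reach_last gfb_t) => [/(congr1 size)|[s reach_s step_s]].
  by rewrite size_nseq /= => n1; rewrite n1 in n_gt1.
have [k] : gfb_layered s.
  apply: gfb_reach_layered reach_s _; exists 0.
  by rewrite /pow2_layer map_nseq all_nseq count_nseq mul0n andbT orbC.
have := gfb_reach_leaves_sum reach_s; rewrite map_nseq sumn_nseq mul1n.
move E : [:: t] step_s => s' step_s; case: step_s E => s0 u v rest + _ _ [-> rest_nil].
rewrite -rest_nil => /(Permutation_map leaves)/Permutation_perm_eq perm_s.
rewrite (pow2_layer_perm _ perm_s) (perm_sumn perm_s) /= addn0.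
by move=> sum_uv lay_uv; exists u, v, k.
Qed.

Theorem corollary2 (n : nat) (T Tgfb Tmb : tree) :
  2 <= n ->
  leaves T = n -> colless_minimal T ->
  is_gfb n Tgfb ->
  leaves Tmb = n -> max_balanced Tmb ->
  root_na Tgfb >= root_na T /\ root_na T >= root_na Tmb /\
  root_nb Tgfb <= root_nb T /\ root_nb T <= root_nb Tmb.
Proof.
move=> n_gt1 leaves_T min_T gfb_Tgfb leaves_Tmb mb_Tmb.
have [u [v [k [-> sum_uv lay_uv]]]] := is_gfb_root_layer n_gt1 gfb_Tgfb.
case: T leaves_T min_T => [/= n1|a b leaves_T min_T]; first by rewrite -n1 in n_gt1.
have range_ab : between_pow2 k.+1 (leaves a + leaves b).
  by rewrite -[_ + _]/(leaves (Node a b)) leaves_T -sum_uv pow2_layer_pair_sum.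
have := colless_minimal_split_tight min_T mb_Tmb (etrans leaves_Tmb (esym leaves_T)).
move=> /between_pow2_tight_split/(_ range_ab)/andP[between_a between_b].
have := pow2_layer_pair_maxn lay_uv between_a between_b.
have := uphalf_leaves_le_root_na (Node a b); have := root_na_max_balanced mb_Tmb.
have := root_na_add_nb (Node a b); have := root_na_add_nb Tmb; have := root_na_add_nb (Node u v).
rewrite /= in leaves_T *; lia.
Qed.
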